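(* Let $\lambda_1\ge\lambda_2\ge\lambda_3>0$ and $D=\mathrm{diag}(\lambda_1,\lambda_2,\lambda_3)$. Every local minimum of $\widetilde W_{1,0}(\cdot;D)$ on $SO(3)$ is a global minimum. In contrast, there exist such $D$ for which $\widetilde W_{1,0}(\cdot;D)$ has local maxima on $SO(3)$ that are not global maxima (e.g. $\mathrm{diag}(1,-1,-1)$ when $\lambda_1>\lambda_2>\lambda_3$ and $\lambda_1-\lambda_2>2$).
   Context: $\mathrm{sym}(Y)=\tfrac12(Y+Y^T)$, $\|Y\|^2=\mathrm{tr}(Y^TY)$ (Frobenius norm). $\widetilde W_{1,0}(R;D)=\|\mathrm{sym}(R^TD-\mathbb I_3)\|^2$ for $R\in SO(3)$. *)

From HB Require Import structures.
From mathcomp Require Import all_boot all_order all_algebra.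
Set Implicit Arguments. Unset Strict Implicit. Unset Printing Implicit Defensive.
Import Order.TTheory GRing.Theory Num.Theory.
Local Open Scope ring_scope.

Definition symm (R : rcfType) (Y : 'M[R]_3) : 'M[R]_3 := 2^-1 *: (Y + Y^T).

Definition frob2 (R : rcfType) (Y : 'M[R]_3) : R := \tr (Y^T *m Y).

Definition SO3 (R : rcfType) (Q : 'M[R]_3) : Prop :=
  Q^T *m Q = 1%:M /\ \det Q = 1.

Definition Wt (R : rcfType) (D Q : 'M[R]_3) : R :=
  frob2 (symm (Q^T *m D - 1%:M)).

(* local / global extrema of f restricted to SO(3); neighbourhoods are
   Frobenius balls (we use the squared norm, same topology). *)
Definition SO3_local_min (R : rcfType) (f : 'M[R]_3 -> R) (Q : 'M[R]_3) : Prop :=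
  SO3 Q /\ exists eps : R, 0 < eps /\
    forall P, SO3 P -> frob2 (P - Q) < eps -> f Q <= f P.
Definition SO3_local_max (R : rcfType) (f : 'M[R]_3 -> R) (Q : 'M[R]_3) : Prop :=
  SO3 Q /\ exists eps : R, 0 < eps /\
    forall P, SO3 P -> frob2 (P - Q) < eps -> f P <= f Q.
Definition SO3_global_min (R : rcfType) (f : 'M[R]_3 -> R) (Q : 'M[R]_3) : Prop :=
  SO3 Q /\ forall P, SO3 P -> f Q <= f P.
Definition SO3_global_max (R : rcfType) (f : 'M[R]_3 -> R) (Q : 'M[R]_3) : Prop :=
  SO3 Q /\ forall P, SO3 P -> f P <= f Q.

Definition diag3 (R : rcfType) (a b c : R) : 'M[R]_3 :=
  \matrix_(i < 3, j < 3)
    (if i == j then (if val i == 0%N then a else if val i == 1%N then b else c) else 0).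

From HB Require Import structures.
From mathcomp Require Import all_boot all_order all_algebra.
From mathcomp Require Import ring lra.
Import Order.TTheory GRing.Theory Num.Theory.
Local Open Scope ring_scope.
Set Implicit Arguments. Unset Strict Implicit. Unset Printing Implicit Defensive.

(* Parametrize SO(3) by unit quaternions q = (w, x, y, z): every
   rotation is quat_rot q for some unit q (SO3_quat_rot, via the rank-one
   "quaternion Gram matrix" 4 q q^T built from the entries of the rotation),
   and the squared Frobenius distance of two such rotations is
   8 (1 - <p, q>^2).  In these coordinates W only depends on the squares
   (w^2, x^2, y^2, z^2), which range over the standard simplex, and there it is
   an affine function plus half the square of an affine function, hence
   convex (energy, Wt_quat_rot, energy_convex).
   - Local minima are global, for every diagonal D: given unit quaternions q, p
     and small t > 0, a unit quaternion r with r_i^2 = (1-t) q_i^2 + t p_i^2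
     can be chosen close to q (unit_quat_interp); minimality at q and
     convexity then give W(q) <= W(p).
   - Near the half turn diag(1,-1,-1) = quat_rot (0,1,0,0) the energy drops
     linearly in s = w^2 + y^2 + z^2 when l1 - l2 > 2 and l1 - l3 > 2, up to a
     quadratic error, so it is a local maximum; the half turn
     diag(-1,-1,1) has strictly larger energy whenever l3 < l1. *)

Section Coordinates.
Variable R : rcfType.

(* Explicit 3x3 matrices given by their entries on {0,1,2}^2; the lemmas below
   compute the matrix operations entrywise, reducing matrix identities to
   polynomial identities between entries. *)
Definition M3 (f : nat -> nat -> R) : 'M[R]_3 := \matrix_(i < 3, j < 3) f i j.

Definition entry (M : 'M[R]_3) (a b : nat) : R := M (inord a) (inord b).

Lemma M3_entry (M : 'M[R]_3) : M = M3 (entry M).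
Proof. by apply/matrixP => i j; rewrite !mxE /entry !inord_val. Qed.

Lemma M3_inj (f g : nat -> nat -> R) : M3 f = M3 g ->
  forall a b, (a < 3)%N -> (b < 3)%N -> f a b = g a b.
Proof.
move=> efg a b ha hb.
have := congr1 (fun M : 'M[R]_3 => M (inord a) (inord b)) efg.
by rewrite !mxE !inordK.
Qed.

Lemma M3_eq (f g : nat -> nat -> R) :
  f 0%N 0%N = g 0%N 0%N -> f 0%N 1%N = g 0%N 1%N -> f 0%N 2%N = g 0%N 2%N ->
  f 1%N 0%N = g 1%N 0%N -> f 1%N 1%N = g 1%N 1%N -> f 1%N 2%N = g 1%N 2%N ->
  f 2%N 0%N = g 2%N 0%N -> f 2%N 1%N = g 2%N 1%N -> f 2%N 2%N = g 2%N 2%N ->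
  M3 f = M3 g.
Proof.
move=> *; apply/matrixP => i j; rewrite !mxE.
by case: i => [[|[|[|//]]] ?]; case: j => [[|[|[|//]]] ?].
Qed.

Lemma M3_tr (f : nat -> nat -> R) : (M3 f)^T = M3 (fun i j => f j i).
Proof. by apply/matrixP => i j; rewrite !mxE. Qed.

Lemma M3_mul (f g : nat -> nat -> R) : M3 f *m M3 g =
  M3 (fun i j => f i 0%N * g 0%N j + f i 1%N * g 1%N j + f i 2%N * g 2%N j).
Proof. by apply/matrixP => i j; rewrite !mxE !big_ord_recr big_ord0 /= add0r !mxE. Qed.

Lemma M3_add (f g : nat -> nat -> R) : M3 f + M3 g = M3 (fun i j => f i j + g i j).
Proof. by apply/matrixP => i j; rewrite !mxE. Qed.

Lemma M3_opp (f : nat -> nat -> R) : - M3 f = M3 (fun i j => - f i j).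
Proof. by apply/matrixP => i j; rewrite !mxE. Qed.

Lemma M3_scale (c : R) (f : nat -> nat -> R) : c *: M3 f = M3 (fun i j => c * f i j).
Proof. by apply/matrixP => i j; rewrite !mxE. Qed.

Lemma M3_one : (1%:M : 'M[R]_3) = M3 (fun i j => (i == j)%:R).
Proof. by apply/matrixP => i j; rewrite !mxE. Qed.

Lemma M3_trace (f : nat -> nat -> R) : \tr (M3 f) = f 0%N 0%N + f 1%N 1%N + f 2%N 2%N.
Proof. by rewrite /mxtrace !big_ord_recr big_ord0 /= add0r !mxE. Qed.

Definition cof3 (f : nat -> nat -> R) (i j : nat) : R :=
  match i, j with
  | 0%N, 0%N => f 1%N 1%N * f 2%N 2%N - f 1%N 2%N * f 2%N 1%N
  | 0%N, 1%N => f 0%N 2%N * f 2%N 1%N - f 0%N 1%N * f 2%N 2%N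
  | 0%N, 2%N => f 0%N 1%N * f 1%N 2%N - f 0%N 2%N * f 1%N 1%N
  | 1%N, 0%N => f 1%N 2%N * f 2%N 0%N - f 1%N 0%N * f 2%N 2%N
  | 1%N, 1%N => f 0%N 0%N * f 2%N 2%N - f 0%N 2%N * f 2%N 0%N
  | 1%N, 2%N => f 0%N 2%N * f 1%N 0%N - f 0%N 0%N * f 1%N 2%N
  | 2%N, 0%N => f 1%N 0%N * f 2%N 1%N - f 1%N 1%N * f 2%N 0%N
  | 2%N, 1%N => f 0%N 1%N * f 2%N 0%N - f 0%N 0%N * f 2%N 1%N
  | _, _ => f 0%N 0%N * f 1%N 1%N - f 0%N 1%N * f 1%N 0%N
  end.

Lemma M3_adj (f : nat -> nat -> R) : \adj (M3 f) = M3 (cof3 f).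
Proof.
apply/matrixP => i j; rewrite !mxE /cofactor (expand_det_row _ 0).
rewrite !big_ord_recr big_ord0 /= add0r /cofactor !det_mx11 !mxE /=.
by case: i => [[|[|[|//]]] ?]; case: j => [[|[|[|//]]] ?]; rewrite /bump /=; ring.
Qed.

Lemma M3_det (f : nat -> nat -> R) : \det (M3 f) =
  f 0%N 0%N * (f 1%N 1%N * f 2%N 2%N - f 1%N 2%N * f 2%N 1%N)
  - f 0%N 1%N * (f 1%N 0%N * f 2%N 2%N - f 1%N 2%N * f 2%N 0%N)
  + f 0%N 2%N * (f 1%N 0%N * f 2%N 1%N - f 1%N 1%N * f 2%N 0%N).
Proof.
rewrite (expand_det_row _ 0) !big_ord_recr big_ord0 /= add0r /cofactor.
rewrite !(expand_det_row _ 0) !big_ord_recr !big_ord0 /= !add0r /cofactor.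
by rewrite !det_mx11 !mxE /= /bump /=; ring.
Qed.

Lemma diag3_M3 (l1 l2 l3 : R) : diag3 l1 l2 l3 =
  M3 (fun i j => if i == j then (if i == 0%N then l1 else if i == 1%N then l2 else l3)
                 else 0).
Proof. by apply/matrixP => i j; rewrite !mxE. Qed.

End Coordinates.

Section Quaternions.
Variable R : rcfType.

(* The rotation matrix of the (not necessarily unit) quaternion w + xi + yj + zk. *)
Definition quat_rot (w x y z : R) : 'M[R]_3 := M3 (fun i j =>
  match i, j with
  | 0%N, 0%N => w^+2 + x^+2 - y^+2 - z^+2
  | 0%N, 1%N => 2 * (x * y - w * z)
  | 0%N, 2%N => 2 * (x * z + w * y)
  | 1%N, 0%N => 2 * (x * y + w * z)
  | 1%N, 1%N => w^+2 - x^+2 + y^+2 - z^+2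
  | 1%N, 2%N => 2 * (y * z - w * x)
  | 2%N, 0%N => 2 * (x * z - w * y)
  | 2%N, 1%N => 2 * (y * z + w * x)
  | _, _ => w^+2 - x^+2 - y^+2 + z^+2
  end).

Lemma quat_rot_orth (w x y z : R) : (quat_rot w x y z)^T *m quat_rot w x y z =
  (w^+2 + x^+2 + y^+2 + z^+2)^+2 *: 1%:M.
Proof. by rewrite M3_tr M3_mul M3_one M3_scale; apply: M3_eq; rewrite /= ?mulr1 ?mulr0; ring. Qed.

Lemma quat_rot_det (w x y z : R) : \det (quat_rot w x y z) = (w^+2 + x^+2 + y^+2 + z^+2)^+3.
Proof. by rewrite M3_det /=; ring. Qed.

Lemma quat_rot_SO3 (w x y z : R) : w^+2 + x^+2 + y^+2 + z^+2 = 1 -> SO3 (quat_rot w x y z).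
Proof. by move=> unit; rewrite /SO3 quat_rot_orth quat_rot_det unit !expr1n scale1r. Qed.

Lemma quat_rot_dist (w x y z w' x' y' z' : R) :
  w^+2 + x^+2 + y^+2 + z^+2 = 1 -> w'^+2 + x'^+2 + y'^+2 + z'^+2 = 1 ->
  frob2 (quat_rot w x y z - quat_rot w' x' y' z') =
  8 * (1 - (w * w' + x * x' + y * y' + z * z')^+2).
Proof.
move=> unit unit'.
have -> : frob2 (quat_rot w x y z - quat_rot w' x' y' z') =
  3 * (w^+2 + x^+2 + y^+2 + z^+2)^+2 + 3 * (w'^+2 + x'^+2 + y'^+2 + z'^+2)^+2
  + 2 * (w^+2 + x^+2 + y^+2 + z^+2) * (w'^+2 + x'^+2 + y'^+2 + z'^+2)
  - 8 * (w * w' + x * x' + y * y' + z * z')^+2.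
  by rewrite /frob2 M3_opp M3_add M3_tr M3_mul M3_trace /=; ring.
by rewrite unit unit'; ring.
Qed.

End Quaternions.

Section QuaternionOfRotation.
Variable R : rcfType.

(* For the rotation f = quat_rot q of a unit quaternion q this is the Gram
   matrix 4 q q^T, expressed through the entries of f only; it lets us
   recover q from its rotation. *)
Definition quat_gram (f : nat -> nat -> R) (i j : nat) : R :=
  match i, j with
  | 0%N, 0%N => 1 + f 0%N 0%N + f 1%N 1%N + f 2%N 2%N
  | 1%N, 1%N => 1 + f 0%N 0%N - f 1%N 1%N - f 2%N 2%N
  | 2%N, 2%N => 1 - f 0%N 0%N + f 1%N 1%N - f 2%N 2%N
  | 3%N, 3%N => 1 - f 0%N 0%N - f 1%N 1%N + f 2%N 2%N
  | 0%N, 1%N | 1%N, 0%N => f 2%N 1%N - f 1%N 2%N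
  | 0%N, 2%N | 2%N, 0%N => f 0%N 2%N - f 2%N 0%N
  | 0%N, 3%N | 3%N, 0%N => f 1%N 0%N - f 0%N 1%N
  | 1%N, 2%N | 2%N, 1%N => f 0%N 1%N + f 1%N 0%N
  | 1%N, 3%N | 3%N, 1%N => f 0%N 2%N + f 2%N 0%N
  | _, _ => f 1%N 2%N + f 2%N 1%N
  end.

(* The 21 entrywise identities of
   Q^T Q = 1, Q Q^T = 1 and adj Q = Q^T (the last from det Q = 1) imply each
   minor identity linearly. *)
Lemma quat_gram_rank_one (Q : 'M[R]_3) : SO3 Q ->
  forall i j c, (i < 4)%N -> (j < 4)%N -> (c < 4)%N ->
  quat_gram (entry Q) i c * quat_gram (entry Q) j c =
  quat_gram (entry Q) i j * quat_gram (entry Q) c c.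
Proof.
case=> orthQ detQ.
have orthQ' : Q *m Q^T = 1%:M by apply: mulmx1C.
have adjQ : \adj Q = Q^T.
  have := mul_mx_adj Q; rewrite detQ => QadjQ.
  by rewrite -[\adj Q]mul1mx -orthQ -mulmxA QadjQ mulmx1.
have eQ := M3_entry Q; move: (entry Q) eQ => f eQ.
rewrite eQ M3_tr M3_mul M3_one in orthQ.
rewrite eQ M3_tr M3_mul M3_one in orthQ'.
rewrite eQ M3_tr M3_adj in adjQ.
move/M3_inj: orthQ => o; move/M3_inj: orthQ' => o'; move/M3_inj: adjQ => a.
have := o 0 0 isT isT; have := o 0 1 isT isT; have := o 0 2 isT isT.
have := o 1 1 isT isT; have := o 1 2 isT isT; have := o 2 2 isT isT.
have := o' 0 0 isT isT; have := o' 0 1 isT isT; have := o' 0 2 isT isT.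
have := o' 1 1 isT isT; have := o' 1 2 isT isT; have := o' 2 2 isT isT.
have := a 0 0 isT isT; have := a 0 1 isT isT; have := a 0 2 isT isT.
have := a 1 0 isT isT; have := a 1 1 isT isT; have := a 1 2 isT isT.
have := a 2 0 isT isT; have := a 2 1 isT isT; have := a 2 2 isT isT.
rewrite /cof3 /= ?mulr1n ?mulr0n; do 21 intro.
by case=> [|[|[|[|//]]]] [|[|[|[|//]]]] [|[|[|[|//]]]] _ _ _ /=; first [ring | lra].
Qed.

Lemma quat_rot_of_gram (f : nat -> nat -> R) (w x y z : R) :
  w^+2 = quat_gram f 0 0 / 4 -> x^+2 = quat_gram f 1 1 / 4 ->
  y^+2 = quat_gram f 2 2 / 4 -> z^+2 = quat_gram f 3 3 / 4 ->
  w * x = quat_gram f 0 1 / 4 -> w * y = quat_gram f 0 2 / 4 ->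
  w * z = quat_gram f 0 3 / 4 -> x * y = quat_gram f 1 2 / 4 ->
  x * z = quat_gram f 1 3 / 4 -> y * z = quat_gram f 2 3 / 4 ->
  w^+2 + x^+2 + y^+2 + z^+2 = 1 /\ M3 f = quat_rot w x y z.
Proof. by rewrite /quat_gram /= => *; split; [lra | apply: M3_eq; rewrite /=; lra]. Qed.

Lemma rank_one_factor (kc ki kj kij : R) : 0 < kc -> ki * kj = kij * kc ->
  (ki / (2 * Num.sqrt kc)) * (kj / (2 * Num.sqrt kc)) = kij / 4.
Proof.
move=> kc_gt0 rank1; have sqrt_kc := sqr_sqrtr (ltW kc_gt0).
have : Num.sqrt kc != 0 by rewrite gt_eqF // sqrtr_gt0.
rewrite -sqrt_kc in rank1; move: (Num.sqrt kc) rank1 => s rank1 s_neq0.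
have -> : ki / (2 * s) * (kj / (2 * s)) = (ki * kj) / (4 * s^+2).
  by rewrite mulf_div expr2; congr (_ / _); ring.
by rewrite rank1 -mulf_div divff ?mulr1 // expf_neq0.
Qed.

Lemma SO3_quat_rot (Q : 'M[R]_3) : SO3 Q ->
  exists w x y z, w^+2 + x^+2 + y^+2 + z^+2 = 1 /\ Q = quat_rot w x y z.
Proof.
move=> SO3Q; have rank1 := quat_gram_rank_one SO3Q.
rewrite [Q]M3_entry; move: (entry Q) rank1 => f rank1.
have [c c_lt4 pivot] : exists2 c, (c < 4)%N & 0 < quat_gram f c c.
  have trace4 : quat_gram f 0 0 + quat_gram f 1 1 + quat_gram f 2 2 + quat_gram f 3 3 = 4.
    by rewrite /quat_gram /=; ring.
  have [|] := ltrP 0 (quat_gram f 0 0); first by exists 0%N.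
  have [|] := ltrP 0 (quat_gram f 1 1); first by exists 1%N.
  have [|] := ltrP 0 (quat_gram f 2 2); first by exists 2%N.
  by exists 3%N => //; lra.
pose q i := quat_gram f i c / (2 * Num.sqrt (quat_gram f c c)).
exists (q 0%N), (q 1%N), (q 2%N), (q 3%N).
by apply: quat_rot_of_gram; rewrite ?expr2; apply: rank_one_factor => //; apply: rank1.
Qed.

End QuaternionOfRotation.

Section Energy.
Variable R : rcfType.
Variables l1 l2 l3 : R.

(* W at the rotation of a unit quaternion, in terms of its squared coordinates
   x = (w^2, x^2, y^2, z^2): a_i are the diagonal entries of the rotation and
   L = tr (D Q).  Since a_i and L are affine in x, energy is affine plus L^2/2. *)
Definition energy (x0 x1 x2 x3 : R) : R :=
  let a1 := x0 + x1 - x2 - x3 in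
  let a2 := x0 - x1 + x2 - x3 in
  let a3 := x0 - x1 - x2 + x3 in
  let L := l1 * a1 + l2 * a2 + l3 * a3 in
  (l1^+2 + l2^+2 + l3^+2) / 2 + L^+2 / 2
  - (l2 * l3 * a1 + l1 * l3 * a2 + l1 * l2 * a3) - 2 * L + 3.

Lemma Wt_quat_rot (w x y z : R) : w^+2 + x^+2 + y^+2 + z^+2 = 1 ->
  Wt (diag3 l1 l2 l3) (quat_rot w x y z) = energy (w^+2) (x^+2) (y^+2) (z^+2).
Proof.
move=> unit; set n := w^+2 + x^+2 + y^+2 + z^+2 in unit.
have -> : Wt (diag3 l1 l2 l3) (quat_rot w x y z) =
  let a1 := w^+2 + x^+2 - y^+2 - z^+2 in
  let a2 := w^+2 - x^+2 + y^+2 - z^+2 in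
  let a3 := w^+2 - x^+2 - y^+2 + z^+2 in
  let L := l1 * a1 + l2 * a2 + l3 * a3 in
  (l1^+2 + l2^+2 + l3^+2) / 2 * n^+2 + L^+2 / 2
  - n * (l2 * l3 * a1 + l1 * l3 * a2 + l1 * l2 * a3) - 2 * L + 3.
  rewrite /Wt /quat_rot /symm /frob2 diag3_M3 M3_one /n.
  by rewrite !(M3_tr, M3_mul, M3_opp, M3_add, M3_scale) M3_trace /=; field.
by rewrite unit /energy /=; ring.
Qed.

(* The energy is convex: the defect in Jensen's inequality is
   t (1 - t) / 2 (L x - L y)^2. *)
Lemma energy_convex (x0 x1 x2 x3 y0 y1 y2 y3 t : R) : 0 <= t -> t <= 1 ->
  energy ((1 - t) * x0 + t * y0) ((1 - t) * x1 + t * y1)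
         ((1 - t) * x2 + t * y2) ((1 - t) * x3 + t * y3)
  <= (1 - t) * energy x0 x1 x2 x3 + t * energy y0 y1 y2 y3.
Proof.
move=> t_ge0 t_le1; rewrite -subr_ge0.
set L := fun x0 x1 x2 x3 : R =>
  l1 * (x0 + x1 - x2 - x3) + l2 * (x0 - x1 + x2 - x3) + l3 * (x0 - x1 - x2 + x3).
have -> : (1 - t) * energy x0 x1 x2 x3 + t * energy y0 y1 y2 y3 -
  energy ((1 - t) * x0 + t * y0) ((1 - t) * x1 + t * y1)
         ((1 - t) * x2 + t * y2) ((1 - t) * x3 + t * y3)
  = t * (1 - t) / 2 * (L x0 x1 x2 x3 - L y0 y1 y2 y3)^+2.
  by rewrite /energy /L /=; field.
by apply: mulr_ge0; [apply: divr_ge0; nra | exact: sqr_ge0].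
Qed.

End Energy.

Section Interpolation.
Variable R : rcfType.

Lemma signed_sqrt_interp (a b t : R) : 0 <= t -> t <= 1 ->
  exists s, s^+2 = (1 - t) * a^+2 + t * b^+2 /\ (a - s)^+2 <= t * (a^+2 + b^+2).
Proof.
move=> t_ge0 t_le1.
have u_ge0 : 0 <= (1 - t) * a^+2 + t * b^+2 by have := sqr_ge0 a; have := sqr_ge0 b; nra.
have sqrt_ge0 := sqrtr_ge0 ((1 - t) * a^+2 + t * b^+2).
have sqrt_sq := sqr_sqrtr u_ge0.
move: (Num.sqrt _) sqrt_ge0 sqrt_sq => s s_ge0 s_sq.
have [a_ge0 | a_lt0] := lerP 0 a; [exists s | exists (- s)]; rewrite ?sqrrN.
  by split=> //; case: (lerP s a); nra.
by split=> //; case: (lerP s (- a)); nra.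
Qed.

Lemma unit_quat_interp (w x y z w' x' y' z' t : R) :
  w^+2 + x^+2 + y^+2 + z^+2 = 1 -> w'^+2 + x'^+2 + y'^+2 + z'^+2 = 1 ->
  0 <= t -> t <= 1 ->
  exists rw rx ry rz,
    [/\ rw^+2 = (1 - t) * w^+2 + t * w'^+2, rx^+2 = (1 - t) * x^+2 + t * x'^+2,
        ry^+2 = (1 - t) * y^+2 + t * y'^+2, rz^+2 = (1 - t) * z^+2 + t * z'^+2
      & rw^+2 + rx^+2 + ry^+2 + rz^+2 = 1 /\ 1 - t <= rw * w + rx * x + ry * y + rz * z].
Proof.
move=> unit unit' t_ge0 t_le1.
have [rw [ew dw]] := signed_sqrt_interp w w' t_ge0 t_le1.
have [rx [ex dx]] := signed_sqrt_interp x x' t_ge0 t_le1.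
have [ry [ey dy]] := signed_sqrt_interp y y' t_ge0 t_le1.
have [rz [ez dz]] := signed_sqrt_interp z z' t_ge0 t_le1.
exists rw, rx, ry, rz.
have runit : rw^+2 + rx^+2 + ry^+2 + rz^+2 = 1.
  transitivity ((1 - t) * (w^+2 + x^+2 + y^+2 + z^+2) + t * (w'^+2 + x'^+2 + y'^+2 + z'^+2)).
    by rewrite ew ex ey ez; ring.
  by rewrite unit unit'; ring.
split => //; split => //.
have : (w - rw)^+2 + (x - rx)^+2 + (y - ry)^+2 + (z - rz)^+2 <=
  t * (w^+2 + x^+2 + y^+2 + z^+2) + t * (w'^+2 + x'^+2 + y'^+2 + z'^+2) by lra.
have -> : (w - rw)^+2 + (x - rx)^+2 + (y - ry)^+2 + (z - rz)^+2 =
  (w^+2 + x^+2 + y^+2 + z^+2) + (rw^+2 + rx^+2 + ry^+2 + rz^+2)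
  - 2 * (rw * w + rx * x + ry * y + rz * z) by ring.
by rewrite unit unit' runit; lra.
Qed.

End Interpolation.

(* First claim, for every diagonal D: a local minimum q of W is global, since
   for small t the interpolant r between q and any p is admissible, so
   E(q) <= E(r) <= (1 - t) E(q) + t E(p) by convexity. *)
Lemma local_min_is_global (R : rcfType) (l1 l2 l3 : R) (Q : 'M[R]_3) :
  SO3_local_min (Wt (diag3 l1 l2 l3)) Q -> SO3_global_min (Wt (diag3 l1 l2 l3)) Q.
Proof.
case=> SO3Q [eps [eps_gt0 locmin]]; split=> // P SO3P.
have [w [x [y [z [unit eQ]]]]] := SO3_quat_rot SO3Q; subst Q.
have [w' [x' [y' [z' [unit' eP]]]]] := SO3_quat_rot SO3P; subst P.
pose t := Num.min (1 / 2) (eps / 32).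
have t_gt0 : 0 < t by rewrite /t lt_min; apply/andP; split; lra.
have t_le_half : t <= 1 / 2 by rewrite /t ge_min lexx.
have t_le_eps : t <= eps / 32 by rewrite /t ge_min lexx orbT.
have t_le1 : t <= 1 by lra.
have [rw [rx [ry [rz [ew ex ey ez [runit close]]]]]] :=
  unit_quat_interp unit unit' (ltW t_gt0) t_le1.
have near : frob2 (quat_rot rw rx ry rz - quat_rot w x y z) < eps.
  rewrite quat_rot_dist //; move: close; set d := rw * w + rx * x + ry * y + rz * z.
  by move=> close; nra.
have := locmin _ (quat_rot_SO3 runit) near.
rewrite !Wt_quat_rot // ew ex ey ez => le_interp.
have := energy_convex l1 l2 l3 (w^+2) (x^+2) (y^+2) (z^+2)
          (w'^+2) (x'^+2) (y'^+2) (z'^+2) (ltW t_gt0) t_le1.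
move: (energy _ _ _ _ _ _ _) (energy _ _ _ _ _ _ _) (energy _ _ _ _ _ _ _) le_interp.
move=> Eq Ep Er le_interp convex.
by rewrite -(ler_pM2l t_gt0); lra.
Qed.

Section LocalMaximum.
Variable R : rcfType.
Variables l1 l2 l3 : R.

Lemma energy_gap (x0 x1 x2 x3 : R) : x0 + x1 + x2 + x3 = 1 ->
  energy l1 l2 l3 x0 x1 x2 x3 - energy l1 l2 l3 0 1 0 0 =
  - 2 * ((l2 + l3)^+2 + 2 * (l2 + l3)) * x0 + 2 * (l1 - l2) * (2 - (l1 - l2)) * x2
  + 2 * (l1 - l3) * (2 - (l1 - l3)) * x3
  + 2 * (x0 * (l2 + l3) + x2 * (l2 - l1) + x3 * (l3 - l1))^+2.
Proof.
move=> simplex; have -> : x1 = 1 - x0 - x2 - x3 by lra.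
by rewrite /energy /=; field.
Qed.

(* When all three linear coefficients of energy_gap are negative, the linear
   decrease -m s (s = x0 + x2 + x3) dominates the square term 2 u^2 <= 2 K^2 s^2
   for s < m / (2 K^2). *)
Lemma energy_e1_local_max : 0 < l2 + l3 -> 2 < l1 - l2 -> 2 < l1 - l3 ->
  exists2 delta : R, 0 < delta & forall x0 x1 x2 x3 : R,
    0 <= x0 -> 0 <= x2 -> 0 <= x3 -> x0 + x1 + x2 + x3 = 1 -> x0 + x2 + x3 < delta ->
    energy l1 l2 l3 x0 x1 x2 x3 <= energy l1 l2 l3 0 1 0 0.
Proof.
move=> l23_gt0 gap2 gap3.
set c0 := 2 * ((l2 + l3)^+2 + 2 * (l2 + l3)).
set c2 := 2 * (l1 - l2) * ((l1 - l2) - 2).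
set c3 := 2 * (l1 - l3) * ((l1 - l3) - 2).
set m := Num.min c0 (Num.min c2 c3).
have m_gt0 : 0 < m by rewrite /m !lt_min; apply/and3P; split; rewrite /c0 /c2 /c3; nra.
have m_c0 : m <= c0 by rewrite /m ge_min lexx.
have m_c2 : m <= c2 by rewrite /m !ge_min lexx orbT.
have m_c3 : m <= c3 by rewrite /m !ge_min lexx !orbT.
set K := 2 * l1.
have K2_gt0 : 0 < 2 * K^+2 by rewrite pmulr_rgt0 // exprn_gt0 // /K; lra.
exists (m / (2 * K^+2)); first by rewrite divr_gt0.
move=> x0 x1 x2 x3 x0_ge0 x2_ge0 x3_ge0 simplex small.
rewrite -subr_le0 energy_gap //.
set s := x0 + x2 + x3 in small *.
set u := x0 * (l2 + l3) + x2 * (l2 - l1) + x3 * (l3 - l1).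
have u_bound : u^+2 <= K^+2 * s^+2.
  have u_le : u <= K * s by rewrite /u /K /s; nra.
  have u_ge : - (K * s) <= u by rewrite /u /K /s; nra.
  have : 0 <= (K * s - u) * (u + K * s) by apply: mulr_ge0; lra.
  by rewrite -exprMn; nra.
have s_small : 2 * K^+2 * s <= m.
  by move: small; rewrite ltr_pdivlMr //; lra.
have linear_part : -2 * ((l2 + l3)^+2 + 2 * (l2 + l3)) * x0 + 2 * (l1 - l2) * (2 - (l1 - l2)) * x2
    + 2 * (l1 - l3) * (2 - (l1 - l3)) * x3 <= - m * s.
  by rewrite /s; rewrite /c0 /c2 /c3 in m_c0 m_c2 m_c3; nra.
have s_ge0 : 0 <= s by rewrite /s; lra.
have : 2 * K^+2 * s^+2 <= m * s by rewrite [s^+2]expr2 mulrA -subr_ge0 -mulrBl mulr_ge0 // subr_ge0.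
lra.
Qed.

Lemma energy_e3_gap : energy l1 l2 l3 0 0 0 1 - energy l1 l2 l3 0 1 0 0 = 4 * (l1 - l3).
Proof. by rewrite /energy /=; field. Qed.

End LocalMaximum.

Section RotationByPi.
Variable R : rcfType.
Variables l1 l2 l3 : R.

Lemma diag_half_turn_x : diag3 1 (-1) (-1) = quat_rot 0 1 0 0 :> 'M[R]_3.
Proof. by rewrite diag3_M3; apply: M3_eq; rewrite /=; ring. Qed.

(* Second claim, first half: rotations within Frobenius distance 8 delta of
   diag(1, -1, -1) have s = 1 - x^2 < delta. *)
Lemma half_turn_x_local_max : 0 < l2 + l3 -> 2 < l1 - l2 -> 2 < l1 - l3 ->
  SO3_local_max (Wt (diag3 l1 l2 l3)) (diag3 1 (-1) (-1)).
Proof.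
move=> l23_gt0 gap2 gap3.
have e1_unit : 0^+2 + 1^+2 + 0^+2 + 0^+2 = 1 :> R by ring.
rewrite diag_half_turn_x; split; first exact: quat_rot_SO3.
have [delta delta_gt0 locmax] := energy_e1_local_max l23_gt0 gap2 gap3.
exists (8 * delta); split; first lra.
move=> P SO3P; have [w [x [y [z [unit eP]]]]] := SO3_quat_rot SO3P; subst P.
rewrite quat_rot_dist // !Wt_quat_rot // !expr0n /= !expr1n => near.
apply: locmax; rewrite ?sqr_ge0 //.
by move: near; rewrite !(mulr0, mulr1, addr0, add0r); lra.
Qed.

Lemma half_turn_x_not_global_max : l3 < l1 ->
  ~ SO3_global_max (Wt (diag3 l1 l2 l3)) (diag3 1 (-1) (-1)).
Proof.
move=> l31 [_ globmax].
have e3_unit : 0^+2 + 0^+2 + 0^+2 + 1^+2 = 1 :> R by ring.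
have e1_unit : 0^+2 + 1^+2 + 0^+2 + 0^+2 = 1 :> R by ring.
have := globmax _ (quat_rot_SO3 e3_unit).
rewrite diag_half_turn_x !Wt_quat_rot // !expr0n !expr1n /=.
by have := energy_e3_gap l1 l2 l3; lra.
Qed.

End RotationByPi.

Theorem mainTheorem13 :
  (forall (R : rcfType) (l1 l2 l3 : R) (Q : 'M[R]_3),
      l2 <= l1 -> l3 <= l2 -> 0 < l3 ->
      SO3_local_min (Wt (diag3 l1 l2 l3)) Q ->
      SO3_global_min (Wt (diag3 l1 l2 l3)) Q)
  /\
  (forall (R : rcfType) (l1 l2 l3 : R),
      l2 < l1 -> l3 < l2 -> 0 < l3 -> 2 < l1 - l2 ->
      SO3_local_max (Wt (diag3 l1 l2 l3)) (diag3 1 (-1) (-1)) /\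
      ~ SO3_global_max (Wt (diag3 l1 l2 l3)) (diag3 1 (-1) (-1))).
Proof.
split=> [R l1 l2 l3 Q _ _ _ | R l1 l2 l3 l21 l32 l3_gt0 gap].
  exact: local_min_is_global.
split; first by apply: half_turn_x_local_max; lra.
by apply: half_turn_x_not_global_max; lra.
Qed.
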